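(* Let $\zeta\in G\setminus\{0\}$ and let $f,g:G\times G\to\mathbb{C}$ be functions such that $L_aL_b=f(a,b)L_{a+b}+g(a,b)L_{a+b+\zeta}$ ($a,b\in G$) defines a CLSAS on $\mathcal{W}$. Suppose that there exist $\gamma\in\mathbb{C}$ and $\lambda\in G$ with $\gamma\neq\lambda$ such that $f(a,b)=\lambda+b$ whenever $\lambda+a+b\neq0$ and $f(a,b)=\frac{(\lambda+b)(\gamma-\lambda-b)}{\gamma-\lambda}$ whenever $\lambda+a+b=0$. Then $g(a,b)=0$ for all $a,b\in G$.
   Context: $G$ is a free (additive) subgroup of $\mathbb{C}$ of rank $\nu>1$. The high rank Witt algebra $\mathcal{W}$ has basis $\{L_a\mid a\in G\}$ and bracket $[L_a,L_b]=(b-a)L_{a+b}$. A left-symmetric algebra is a complex vector space with bilinear product satisfying $(xy)z-x(yz)=(yx)z-y(xz)$; a compatible left-symmetric algebraic structure (CLSAS) on a Lie algebra $\mathfrak g$ is such a product on $\mathfrak g$ with $xy-yx=[x,y]$. *)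

(* The base field C is modelled as an arbitrary
   numClosedFieldType (the complex numbers are one instance). *)
From HB Require Import structures.
From mathcomp Require Import all_boot all_order all_algebra.
Set Implicit Arguments. Unset Strict Implicit. Unset Printing Implicit Defensive.
Import Order.TTheory GRing.Theory Num.Theory.
Local Open Scope ring_scope.

Section Witt.
Variable C : numClosedFieldType.

Definition free_subgroup_of_rank (G : C -> Prop) (nu : nat) : Prop :=
  exists e : 'I_nu -> C,
    (forall z : 'I_nu -> int, \sum_(i < nu) e i *~ z i = 0 -> forall i, z i = 0)
    /\ (forall x, G x <-> exists z : 'I_nu -> int, x = \sum_(i < nu) e i *~ z i).

(* Elements of the vector space with basis {L_a | a in G}: finite formal
   sums  sum_k c_k L_{a_k}, encoded as a list of pairs (c_k, a_k). *)
Definition fsum := seq (C * C).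

Definition inW (G : C -> Prop) (u : fsum) : Prop := forall p, p \in u -> G p.2.

Definition coef (u : fsum) (x : C) : C := \sum_(p <- u | p.2 == x) p.1.

Definition eqW (u v : fsum) : Prop := forall x, coef u x = coef v x.

Definition scaleW (k : C) (u : fsum) : fsum := [seq (k * p.1, p.2) | p <- u].
Definition addW (u v : fsum) : fsum := u ++ v.
Definition subW (u v : fsum) : fsum := u ++ scaleW (-1) v.

(* bilinear extension of a product given on basis elements:
   prod a b = L_a L_b as a formal sum *)
Definition mulW (prod : C -> C -> fsum) (u v : fsum) : fsum :=
  flatten [seq scaleW (p.1 * q.1) (prod p.2 q.2) | p <- u, q <- v].

Definition witt_bracket (a b : C) : fsum := [:: (b - a, a + b)].

Definition lsprod (f g : C -> C -> C) (zeta : C) (a b : C) : fsum :=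
  [:: (f a b, a + b); (g a b, a + b + zeta)].

(* prod (bilinearly extended) is a compatible left-symmetric algebraic
   structure on the Lie algebra with bracket br, on the span of {L_a | a in G} *)
Definition is_CLSAS (G : C -> Prop) (br prod : C -> C -> fsum) : Prop :=
  (forall u v w, inW G u -> inW G v -> inW G w ->
     eqW (subW (mulW prod (mulW prod u v) w) (mulW prod u (mulW prod v w)))
         (subW (mulW prod (mulW prod v u) w) (mulW prod v (mulW prod u w))))
  /\ (forall u v, inW G u -> inW G v ->
     eqW (subW (mulW prod u v) (mulW prod v u)) (mulW br u v)).

End Witt.

From HB Require Import structures.
From mathcomp Require Import all_boot all_order all_algebra.
From mathcomp Require Import ring.
Import Order.TTheory GRing.Theory Num.Theory.
Set Implicit Arguments. Unset Strict Implicit.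
Local Open Scope ring_scope.

(* Comparing coefficients of single basis elements turns the CLSAS axioms into
   scalar identities: g is symmetric, and the left-symmetry identity gives one
   relation at L_(a+b+c+zeta) and one at L_(a+b+c+2zeta).  On the exceptional
   line lambda + a + b = 0 the given f equals lambda + b + kappa a b with
   kappa = 1/(gamma - lambda).  Putting b = 0 in the first relation, where
   f(a,0) = lambda and f(0,c) = lambda + c, expresses g through h := g(0,-):
     zeta g(a,c) = h(c) f(a,c+zeta) - f(a,c) h(a+c),
   so it suffices to show h = 0.  If lambda + zeta <> 0, this relation at c = 0
   makes h constant off one point, and the second relation at b = -lambda - c
   then forces h(0)^2 kappa b c = 0.  If lambda = -zeta, the relations at small
   multiples of zeta give h(-zeta) = h(0) = h(zeta) = 0, after which
   x h(x) = (x - zeta) h(x + zeta) and (x + 2 zeta) h(x) = (x + zeta) h(x + zeta)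
   yield 2 zeta^2 h(x) = 0. *)

Lemma eq_shiftF (C : numDomainType) (k : int) (z u v : C) :
  k != 0 -> z != 0 -> u - v = z *~ k -> (u == v) = false.
Proof.
by move=> k0 z0 e; apply/negbTE; rewrite -subr_eq0 e mulrz_eq0 negb_or k0.
Qed.

Ltac shift_by z k := apply: (@eq_shiftF _ k z); [done | assumption | ring].

(* Decides every [u == v] in the goal whose sides differ by a small integer
   multiple of [z], given [z != 0] in the context. *)
Ltac decide_shifts z :=
  repeat match goal with
  | |- context [ ?u == ?v ] =>
      first [ have -> : (u == v) = true by apply/eqP; ring
            | have -> : (u == v) = false by
                first [ shift_by z (1 : int) | shift_by z (-1 : int)
                      | shift_by z (2 : int) | shift_by z (-2 : int)
                      | shift_by z (3 : int) | shift_by z (-3 : int)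
                      | shift_by z (4 : int) | shift_by z (-4 : int) ] ]
  end.

(* To conclude [X = Y] from equations [A_i = B_i] it suffices to exhibit
   [w != 0] and [k_i] with [w (X - Y) = sum_i k_i (A_i - B_i)], a ring identity. *)
Lemma eq_lincomb1 (R : idomainType) (w k X Y A B : R) :
  w != 0 -> A = B -> w * (X - Y) = k * (A - B) -> X = Y.
Proof.
move=> w0 ->; rewrite subrr mulr0 => /eqP.
by rewrite mulf_eq0 (negbTE w0) subr_eq0 => /eqP.
Qed.

Lemma eq_lincomb2 (R : idomainType) (w k1 k2 X Y A1 B1 A2 B2 : R) :
  w != 0 -> A1 = B1 -> A2 = B2 ->
  w * (X - Y) = k1 * (A1 - B1) + k2 * (A2 - B2) -> X = Y.
Proof. by move=> w0 -> ->; rewrite subrr mulr0 add0r; apply: eq_lincomb1. Qed.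

Lemma eq_lincomb3 (R : idomainType) (w k1 k2 k3 X Y A1 B1 A2 B2 A3 B3 : R) :
  w != 0 -> A1 = B1 -> A2 = B2 -> A3 = B3 ->
  w * (X - Y) = k1 * (A1 - B1) + k2 * (A2 - B2) + k3 * (A3 - B3) -> X = Y.
Proof. by move=> w0 -> ->; rewrite !subrr !mulr0 !add0r; apply: eq_lincomb1. Qed.

Lemma free_subgroup_closed (C : numClosedFieldType) (G : C -> Prop) nu :
  free_subgroup_of_rank G nu ->
  [/\ G 0, (forall x y, G x -> G y -> G (x + y)) & (forall x, G x -> G (- x))].
Proof.
move=> [e [_ He]]; split.
- by apply/He; exists (fun _ => 0); rewrite big1 // => i _; rewrite mulr0z.
- move=> x y /He [zx ->] /He [zy ->]; apply/He; exists (fun i => zx i + zy i).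
  by rewrite -big_split /=; apply: eq_bigr => i _; rewrite mulrzDr.
- move=> x /He [zx ->]; apply/He; exists (fun i => - zx i).
  by rewrite -sumrN; apply: eq_bigr => i _; rewrite mulrNz.
Qed.

Section CoefficientIdentities.
Variables (C : numClosedFieldType) (G : C -> Prop) (f g : C -> C -> C) (zeta : C).
Hypothesis zeta_neq0 : zeta != 0.
Hypothesis clsas : is_CLSAS G (@witt_bracket C) (lsprod f g zeta).

Let inW_basis a : G a -> inW G [:: (1, a)].
Proof. by move=> Ga p; rewrite inE => /eqP ->. Qed.

(* Coefficient of [L_(a+b+zeta)] in [L_a L_b - L_b L_a = [L_a, L_b]]. *)
Lemma lsprod_g_sym a b : G a -> G b -> g a b = g b a.
Proof.
move=> Ga Gb; have := clsas.2 _ _ (inW_basis Ga) (inW_basis Gb) (a + b + zeta).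
rewrite /subW /mulW /witt_bracket /= /scaleW /= /coef !big_cons !big_nil /=.
decide_shifts zeta => e.
by apply: (eq_lincomb1 (k := 1) (oner_neq0 _) e); ring.
Qed.

(* Coefficient of [L_(a+b+c+zeta)] in the left-symmetry identity for
   [L_a, L_b, L_c]. *)
Lemma lsprod_assoc_shift1 a b c : G a -> G b -> G c ->
  f a b * g (a + b) c + g a b * f (a + b + zeta) c
    - (f b c * g a (b + c) + g b c * f a (b + c + zeta))
  = f b a * g (b + a) c + g b a * f (b + a + zeta) c
    - (f a c * g b (a + c) + g a c * f b (a + c + zeta)).
Proof.
move=> Ga Gb Gc.
have := clsas.1 _ _ _ (inW_basis Ga) (inW_basis Gb) (inW_basis Gc) (a + b + c + zeta).
rewrite /subW /mulW /= /scaleW /= /coef !big_cons !big_nil /=.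
decide_shifts zeta => e.
by apply: (eq_lincomb1 (k := 1) (oner_neq0 _) e); ring.
Qed.

(* Coefficient of [L_(a+b+c+2zeta)] in the same identity. *)
Lemma lsprod_assoc_shift2 a b c : G a -> G b -> G c ->
  g a b * g (a + b + zeta) c - g b c * g a (b + c + zeta)
  = g b a * g (b + a + zeta) c - g a c * g b (a + c + zeta).
Proof.
move=> Ga Gb Gc.
have := clsas.1 _ _ _ (inW_basis Ga) (inW_basis Gb) (inW_basis Gc) (a + b + c + zeta + zeta).
rewrite /subW /mulW /= /scaleW /= /coef !big_cons !big_nil /=.
decide_shifts zeta => e.
by apply: (eq_lincomb1 (k := 1) (oner_neq0 _) e); ring.
Qed.

End CoefficientIdentities.

Section VanishingOfG.
Variables (C : numFieldType) (G : C -> Prop) (f g : C -> C -> C).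
Variables (zeta lambda kappa : C).
Hypothesis G0 : G 0.
Hypothesis G_add : forall x y, G x -> G y -> G (x + y).
Hypothesis G_opp : forall x, G x -> G (- x).
Hypothesis G_zeta : G zeta.
Hypothesis G_lambda : G lambda.
Hypothesis zeta_neq0 : zeta != 0.
Hypothesis kappa_neq0 : kappa != 0.
Hypothesis g_sym : forall a b, G a -> G b -> g a b = g b a.
Hypothesis assoc_shift1 : forall a b c, G a -> G b -> G c ->
  f a b * g (a + b) c + g a b * f (a + b + zeta) c
    - (f b c * g a (b + c) + g b c * f a (b + c + zeta))
  = f b a * g (b + a) c + g b a * f (b + a + zeta) c
    - (f a c * g b (a + c) + g a c * f b (a + c + zeta)).
Hypothesis assoc_shift2 : forall a b c, G a -> G b -> G c ->
  g a b * g (a + b + zeta) c - g b c * g a (b + c + zeta)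
  = g b a * g (b + a + zeta) c - g a c * g b (a + c + zeta).
Hypothesis f_generic : forall a b, G a -> G b ->
  lambda + a + b != 0 -> f a b = lambda + b.
Hypothesis f_exceptional : forall a b, G a -> G b ->
  lambda + a + b = 0 -> f a b = lambda + b + kappa * a * b.

Local Notation h := (g 0).

Lemma G_muln x n : G x -> G (x *+ n).
Proof. by move=> Gx; elim: n => [|n IHn]; [rewrite mulr0n | rewrite mulrS; apply: G_add]. Qed.

Ltac in_G := repeat match goal with
  | |- G (_ + _) => apply: G_add
  | |- G (- _) => apply: G_opp
  | |- G (_ *+ _) => apply: G_muln
  | |- G _ => assumption
  end.

Lemma f_eq_lambda_add a b : G a -> G b ->
  (lambda + a + b = 0 -> a * b = 0) -> f a b = lambda + b.
Proof.
move=> Ga Gb ab0; have [e|e] := eqVneq (lambda + a + b) 0; last exact: f_generic.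
by rewrite f_exceptional // -mulrA ab0 // mulr0 addr0.
Qed.

Lemma f_x0 a : G a -> f a 0 = lambda.
Proof. by move=> Ga; rewrite f_eq_lambda_add ?addr0 // => _; rewrite mulr0. Qed.

Lemma f_0x b : G b -> f 0 b = lambda + b.
Proof. by move=> Gb; rewrite f_eq_lambda_add // => _; rewrite mul0r. Qed.

(* [assoc_shift1] at [b = 0]; the arguments [s], [t] let callers choose the
   syntactic form of [a + c] and [c + zeta]. *)
Lemma g_by_h a c s t : G a -> G c -> a + c = s -> c + zeta = t ->
  zeta * g a c = h c * f a t - f a c * h s.
Proof.
move=> Ga Gc <- <-.
have := assoc_shift1 Ga G0 Gc.
rewrite !addr0 !add0r f_x0 // !f_0x ?(g_sym Ga G0) //; last in_G.
by move=> e; apply: (eq_lincomb1 (k := 1) (oner_neq0 _) e); ring.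
Qed.

Lemma h_swap a c s t1 t2 : G a -> G c -> a + c = s -> c + zeta = t1 -> a + zeta = t2 ->
  h c * f a t1 - f a c * h s = h a * f c t2 - f c a * h s.
Proof.
move=> Ga Gc es e1 e2; rewrite -(g_by_h Ga Gc es e1) -(g_by_h Gc Ga _ e2) 1?g_sym //.
by rewrite addrC.
Qed.

Lemma g_h_shift b c s t : G b -> G c -> b + c + zeta = s -> c + zeta = t ->
  g b c * h s = h c * g b t.
Proof.
move=> Gb Gc <- <-; have := assoc_shift2 G0 Gb Gc.
rewrite !add0r !addr0 (g_sym Gb G0) // => e.
by apply: (eq_lincomb1 (k := -1) (oner_neq0 _) e); ring.
Qed.

Section GenericLambda.
Hypothesis lambda_zeta_neq0 : lambda + zeta != 0.

Lemma h0_mul_f_zeta a : G a -> h 0 * f a zeta = (lambda + zeta) * h a.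
Proof.
move=> Ga; have := h_swap Ga G0 (addr0 a) (add0r zeta) erefl.
rewrite f_x0 // !f_0x //; last in_G.
by move=> e; apply: (eq_lincomb1 (k := 1) (oner_neq0 _) e); ring.
Qed.

Lemma h_eq_h0 a : G a -> lambda + a + zeta != 0 -> h a = h 0.
Proof.
move=> Ga na; have := h0_mul_f_zeta Ga; rewrite f_generic // => e.
by apply: (eq_lincomb1 (k := -1) lambda_zeta_neq0 e); ring.
Qed.

Lemma h0_eq0_of_witness c : G c -> c != 0 -> lambda + c != 0 ->
  lambda + c + zeta != 0 -> lambda + c + zeta + zeta != 0 -> h 0 = 0.
Proof.
move=> Gc c0 Lc Lcz Lczz; pose b := - lambda - c.
have Gb : G b by rewrite /b; in_G.
have b0 : b != 0 by rewrite /b -opprD oppr_eq0.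
have z2 : zeta + zeta != 0 by rewrite -mulr2n mulrn_eq0.
have Qb : g b c * h (- lambda + zeta) = h c * g b (c + zeta).
  by apply: g_h_shift => //; rewrite /b; ring.
have Ea : zeta * g b c = h c * f b (c + zeta) - f b c * h (- lambda).
  by apply: g_by_h => //; rewrite /b; ring.
have Eb : zeta * g b (c + zeta)
    = h (c + zeta) * f b (c + zeta + zeta) - f b (c + zeta) * h (- lambda + zeta).
  by apply: g_by_h => //; [in_G | rewrite /b; ring].
have f1 : f b (c + zeta) = lambda + (c + zeta).
  by apply: f_generic; [|in_G|rewrite (_ : _ + _ = zeta) //; rewrite /b; ring].
have f2 : f b (c + zeta + zeta) = lambda + (c + zeta + zeta).
  by apply: f_generic; [|in_G|rewrite (_ : _ + _ = zeta + zeta) //; rewrite /b; ring].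
have f3 : f b c = lambda + c + kappa * b * c.
  by apply: f_exceptional => //; rewrite /b; ring.
have h1 : h c = h 0 by apply: h_eq_h0.
have h2 : h (c + zeta) = h 0 by apply: h_eq_h0; rewrite ?addrA //; in_G.
have h3 : h (- lambda) = h 0 by apply: h_eq_h0; rewrite ?addrN ?add0r //; in_G.
have h4 : h (- lambda + zeta) = h 0 by apply: h_eq_h0; rewrite ?addNKr //; in_G.
rewrite f1 f2 f3 h1 h2 h3 h4 in Ea Eb Qb.
have : h 0 * h 0 * (kappa * b * c) = 0.
  by apply: (eq_lincomb3 (k1 := h 0) (k2 := - h 0) (k3 := - zeta) (oner_neq0 _) Ea Eb Qb); ring.
by move/eqP; rewrite !mulf_eq0 (negbTE b0) (negbTE c0) (negbTE kappa_neq0) !orbF orbb => /eqP.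
Qed.

(* [c = zeta] is a witness unless [lambda] is [-2 zeta] or [-3 zeta]; then [c = - zeta] is. *)
Lemma h0_eq0 : h 0 = 0.
Proof.
have [e2|e2] := eqVneq (lambda + zeta + zeta) 0.
  have lambda_eq : lambda = - zeta - zeta by apply: (eq_lincomb1 (k := 1) (oner_neq0 _) e2); ring.
  by apply: (@h0_eq0_of_witness (- zeta)); try in_G; rewrite ?lambda_eq; decide_shifts zeta.
have [e3|e3] := eqVneq (lambda + zeta + zeta + zeta) 0.
  have lambda_eq : lambda = - zeta - zeta - zeta.
    by apply: (eq_lincomb1 (k := 1) (oner_neq0 _) e3); ring.
  by apply: (@h0_eq0_of_witness (- zeta)); try in_G; rewrite ?lambda_eq; decide_shifts zeta.
exact: (@h0_eq0_of_witness zeta).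
Qed.

Lemma h_eq0_generic x : G x -> h x = 0.
Proof.
move=> Gx; have := h0_mul_f_zeta Gx; rewrite h0_eq0 mul0r => /esym /eqP.
by rewrite mulf_eq0 (negbTE lambda_zeta_neq0) => /eqP.
Qed.

End GenericLambda.

Section SpecialLambda.
Hypothesis lambda_eq : lambda = - zeta.

Lemma f_special_generic a b : G a -> G b -> a + b != zeta -> f a b = b - zeta.
Proof.
move=> Ga Gb ne; rewrite f_generic // lambda_eq; first by rewrite addrC.
by rewrite (_ : _ + _ + _ = a + b - zeta) ?subr_eq0 //; ring.
Qed.

Lemma f_special_exceptional a b : G a -> G b -> a + b = zeta ->
  f a b = b - zeta + kappa * a * b.
Proof.
move=> Ga Gb e; rewrite f_exceptional // lambda_eq; first by rewrite (addrC (- zeta)).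
by rewrite -addrA e addNr.
Qed.

Ltac eval_f E :=
  repeat match type of E with
  | context [f ?x ?y] =>
      first [ rewrite (@f_special_generic x y) in E;
                [ | by in_G | by in_G | by apply/negbT; decide_shifts zeta ]
            | rewrite (@f_special_exceptional x y) in E; [ | by in_G | by in_G | ring ] ]
  end.

Ltac discharge_sides E := repeat specialize (E ltac:(first [by in_G | ring])).

Lemma h_3zeta : h (zeta *+ 3) = h (zeta *+ 2) *+ 2 - h zeta.
Proof.
have e := @h_swap (zeta *+ 2) zeta (zeta *+ 3) (zeta *+ 2) (zeta *+ 3).
discharge_sides e; eval_f e.
by apply: (eq_lincomb1 (k := 1) zeta_neq0 e); ring.
Qed.

Lemma h_opp_zeta : h (- zeta) = h zeta *+ 3 - h (zeta *+ 2) *+ 2.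
Proof.
have e := @h_swap (zeta *+ 2) (- zeta) zeta 0 (zeta *+ 3).
discharge_sides e; eval_f e.
by apply: (eq_lincomb1 (k := -1) zeta_neq0 e); ring.
Qed.

Lemma h_opp_2zeta : h (- (zeta *+ 2)) = h zeta *+ 4 - h (zeta *+ 2) *+ 3.
Proof.
have e := @h_swap zeta (- (zeta *+ 2)) (- zeta) (- zeta) (zeta *+ 2).
discharge_sides e; eval_f e; rewrite h_opp_zeta in e.
have z2 : zeta *+ 2 != 0 by rewrite mulrn_eq0.
by apply: (eq_lincomb1 (k := -1) z2 e); ring.
Qed.

Lemma h0_via_zeta : h 0 *+ 2 = h (- zeta) + h zeta * (1 - kappa * zeta *+ 2).
Proof.
have e := @h_swap zeta (- zeta) 0 0 (zeta *+ 2).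
discharge_sides e; eval_f e.
by apply: (eq_lincomb1 (k := 1) zeta_neq0 e); ring.
Qed.

Lemma h0_via_2zeta :
  h 0 *+ 4 = h (zeta *+ 2) * (2 - kappa * zeta *+ 6) + h (- (zeta *+ 2)) * (2 + kappa * zeta *+ 2).
Proof.
have e := @h_swap (zeta *+ 2) (- (zeta *+ 2)) 0 (- zeta) (zeta *+ 3).
discharge_sides e; eval_f e.
by apply: (eq_lincomb1 (k := 1) zeta_neq0 e); ring.
Qed.

Lemma h_zeta_eq_h_2zeta : h zeta = h (zeta *+ 2).
Proof.
have e1 := h0_via_zeta; have e2 := h0_via_2zeta.
rewrite h_opp_zeta in e1; rewrite h_opp_2zeta in e2.
have w0 : kappa * zeta *+ 12 != 0 by rewrite mulrn_eq0 mulf_neq0.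
by apply: (eq_lincomb2 (k1 := 2) (k2 := -1) w0 e1 e2); ring.
Qed.

Lemma h_zeta_eq0 : h zeta = 0.
Proof.
have q := @g_h_shift (- zeta) (zeta *+ 2) (zeta *+ 2) (zeta *+ 3).
have e1 := @g_by_h (- zeta) (zeta *+ 2) zeta (zeta *+ 3).
have e2 := @g_by_h (- zeta) (zeta *+ 3) (zeta *+ 2) (zeta *+ 4).
discharge_sides q; discharge_sides e1; discharge_sides e2; eval_f e1; eval_f e2.
rewrite h_3zeta -h_zeta_eq_h_2zeta in q e1 e2.
have : h zeta * h zeta * (kappa * zeta ^+ 2 *+ 2) = 0.
  by apply: (eq_lincomb3 (k1 := - h zeta) (k2 := h zeta) (k3 := zeta) (oner_neq0 _) e1 e2 q); ring.
have w : kappa * zeta ^+ 2 *+ 2 != 0 by rewrite mulrn_eq0 mulf_neq0 ?expf_neq0.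
by move/eqP; rewrite mulf_eq0 (negbTE w) orbF mulf_eq0 orbb => /eqP.
Qed.

Lemma h_opp_zeta_eq0 : h (- zeta) = 0.
Proof. by rewrite h_opp_zeta -h_zeta_eq_h_2zeta h_zeta_eq0 !mul0rn subr0. Qed.

Lemma h0_eq0_special : h 0 = 0.
Proof.
have := h0_via_zeta; rewrite h_opp_zeta_eq0 h_zeta_eq0 mul0r addr0 => /eqP.
by rewrite mulrn_eq0 => /eqP.
Qed.

Lemma h_eq0_special x : G x -> h x = 0.
Proof.
move=> Gx; have [->|x0] := eqVneq x 0; first exact: h0_eq0_special.
have [->|xz] := eqVneq x zeta; first exact: h_zeta_eq0.
have Gxz : G (x + zeta) by in_G.
have f_gen a b : G a -> G b -> a + b = x \/ a + b = x + zeta -> f a b = b - zeta.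
  move=> Ga Gb [|] e; apply: f_special_generic; rewrite // e //.
  by rewrite -subr_eq0 addrK.
have f_z_xz : f zeta (x + zeta) = x.
  rewrite f_eq_lambda_add // lambda_eq; first by ring.
  by rewrite addNr add0r => ->; rewrite mulr0.
have e1 := @h_swap x zeta (x + zeta) (zeta *+ 2) (x + zeta).
have e2 := @h_swap (x + zeta) (- zeta) x 0 (x + zeta + zeta).
discharge_sides e1; discharge_sides e2.
rewrite h_zeta_eq0 mul0r f_z_xz (f_gen x zeta) ?(f_gen zeta x) // in e1;
  try by [left; ring | right; ring].
rewrite h_opp_zeta_eq0 mul0r (f_gen (x + zeta) (- zeta)) ?(f_gen (- zeta) (x + zeta + zeta))
  ?(f_gen (- zeta) (x + zeta)) // in e2; try in_G; try by [left; ring | right; ring].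
have w : zeta ^+ 2 *+ 2 != 0 by rewrite mulrn_eq0 expf_neq0.
by apply: (eq_lincomb2 (k1 := - (x + zeta)) (k2 := zeta - x) w e1 e2); ring.
Qed.

End SpecialLambda.

Lemma h_eq0 x : G x -> h x = 0.
Proof.
have [e|ne] := eqVneq (lambda + zeta) 0; last exact: h_eq0_generic.
by apply: h_eq0_special; apply/eqP; rewrite -addr_eq0 e.
Qed.

Lemma g_eq0 a b : G a -> G b -> g a b = 0.
Proof.
move=> Ga Gb; have := g_by_h Ga Gb erefl erefl.
rewrite !h_eq0 //; last in_G.
by move=> e; apply: (eq_lincomb1 (k := 1) zeta_neq0 e); ring.
Qed.

End VanishingOfG.

Lemma f_exceptional_value (F : fieldType) (gamma lambda a b : F) :
  gamma != lambda -> lambda + a + b = 0 ->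
  (lambda + b) * (gamma - lambda - b) / (gamma - lambda)
  = lambda + b + (gamma - lambda)^-1 * a * b.
Proof.
move=> gL e; have -> : a = - lambda - b by apply: (eq_lincomb1 (k := 1) (oner_neq0 _) e); ring.
by field; rewrite subr_eq0.
Qed.

Theorem proposition4p3 (C : numClosedFieldType) (G : C -> Prop) (nu : nat)
  (zeta : C) (f g : C -> C -> C) (gamma lambda : C) :
  (1 < nu)%N -> free_subgroup_of_rank G nu ->
  G zeta -> zeta != 0 ->
  is_CLSAS G (@witt_bracket C) (lsprod f g zeta) ->
  G lambda -> gamma != lambda ->
  (forall a b, G a -> G b ->
     (lambda + a + b != 0 -> f a b = lambda + b) /\
     (lambda + a + b = 0 ->
        f a b = (lambda + b) * (gamma - lambda - b) / (gamma - lambda))) ->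
  forall a b, G a -> G b -> g a b = 0.
Proof.
move=> _ /free_subgroup_closed [G0 G_add G_opp] Gz z0 clsas GL gL f_spec.
have k0 : (gamma - lambda)^-1 != 0 by rewrite invr_eq0 subr_eq0.
apply: (@g_eq0 C G f g zeta lambda (gamma - lambda)^-1) => //.
- exact: (lsprod_g_sym z0 clsas).
- exact: (lsprod_assoc_shift1 z0 clsas).
- exact: (lsprod_assoc_shift2 z0 clsas).
- by move=> a b Ga Gb; case: (f_spec a b Ga Gb).
- by move=> a b Ga Gb e; rewrite (proj2 (f_spec a b Ga Gb) e) (f_exceptional_value gL e).
Qed.
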